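(* The vector fields $Y^n_1,\dots,Y^n_{n-1}$ have polynomial coefficients, are Lie symmetries of the ladder system, are linearly independent over $\mathbf{C}$, and pairwise commute; thus they span an $(n-1)$-dimensional Abelian Lie algebra of polynomial Lie symmetries of the ladder system (so the ladder system is integrable by quadrature).
   Context: Coordinates $x=(x_1,\dots,x_n)\in\mathbf{C}^n$, $n\ge2$. The ladder system is the HLV system $\dot x_i = x_i\sum_{j=1}^n (1+i-j)x_j$, identified with the vector field $X_f=\sum_i x_i\big(\sum_j (1+i-j)x_j\big)\partial/\partial x_i$. A vector field $X$ is a Lie symmetry if $[X_f,X]=0$. Notation: $u=\sum_{j=1}^n x_j$, $D=\sum_{j=1}^n x_j\,\partial/\partial x_j$, and $Y^l_m = x_m u^{l-m-1}\big(D-u\,\partial/\partial x_l\big)$ for $l,m\in\{1,\dots,n\}$. *)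

From HB Require Import structures.
From mathcomp Require Import all_boot all_algebra.
From mathcomp Require Import reals.
From mathcomp Require Import complex.
From mathcomp Require Import mpoly.
Set Implicit Arguments. Unset Strict Implicit. Unset Printing Implicit Defensive.
Import GRing.Theory.
Local Open Scope ring_scope.

(* Polynomial vector fields on F^n: X = sum_i X_i d/dx_i, with X_i in F[x_1..x_n].
   Coordinates are 0-based: x_i, i : 'I_n, stands for the paper's x_(i+1). *)
Definition vfield (F : comNzRingType) (n : nat) := {ffun 'I_n -> {mpoly F[n]}}.

Definition vf_act (F : comNzRingType) n (X : vfield F n) (p : {mpoly F[n]})
  : {mpoly F[n]} := \sum_(i < n) X i * mderiv i p.

Definition lie_bracket (F : comNzRingType) n (X Y : vfield F n) : vfield F n :=
  [ffun i => vf_act X (Y i) - vf_act Y (X i)].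

Definition usum (F : comNzRingType) n : {mpoly F[n]} := \sum_(j < n) 'X_j.

(* The ladder system x_i' = x_i sum_j (1+i-j) x_j (index shift is harmless since
   the coefficient depends only on i-j). *)
Definition ladder (F : comNzRingType) n : vfield F n :=
  [ffun i : 'I_n => 'X_i * \sum_(j < n) ((1 + (i : int) - (j : int))%:~R *: 'X_j)].

(* Y^l_m = x_m u^(l-m-1) (D - u d/dx_l), D = sum_j x_j d/dx_j; only used for m < l,
   so the exponent l-m-1 is a natural number. In components:
   (Y^l_m)_i = x_m u^(l-m-1) (x_i - [i == l] u). *)
Definition Ylm (F : comNzRingType) n (l m : 'I_n) : vfield F n :=
  [ffun i : 'I_n => 'X_m * usum F n ^+ (l - m - 1)%N
                    * ('X_i - (if i == l then usum F n else 0))].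

Lemma ordLast_proof (n : nat) : (1 < n)%N -> (n.-1 < n)%N.
Proof. by case: n. Qed.

Definition ordLast (n : nat) (hn : (1 < n)%N) : 'I_n := Ordinal (ordLast_proof hn).

From HB Require Import structures.
From mathcomp Require Import all_boot all_algebra.
From mathcomp Require Import reals complex mpoly.
From mathcomp Require Import ring.
Import GRing.Theory.
Set Implicit Arguments. Unset Strict Implicit. Unset Printing Implicit Defensive.
Local Open Scope ring_scope.

(* Write Z := D - u d/dx_L, so that Y^L_m = g_m Z with g_m := x_m u^(L-m-1).
   Z kills u and fixes x_m for m <> L, hence fixes every g_m; since
   [g Z, h Z] = (g Z(h) - h Z(g)) Z, the Y^L_m commute.  For the ladder field f
   and w := sum_j j x_j (0-based weights) one computes [f, Z] = (w - L u) Z and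
   f(g_m) = (L u - w) g_m, so [f, g_m Z] = f(g_m) Z + g_m [f, Z] = 0.
   Linear independence: at the m-th unit vector the m-th component of Y^L_m
   equals 1, while that of every other Y^L_j vanishes because of its factor x_j. *)

Section VectorFieldCalculus.
Variables (F : comNzRingType) (n : nat).
Implicit Types (X Y : vfield F n) (g h p q : {mpoly F[n]}).

Definition vf_scale g X : vfield F n := [ffun i => g * X i].

Lemma mderivXU (i j : 'I_n) : mderiv i ('X_j : {mpoly F[n]}) = (j == i)%:R.
Proof.
rewrite mderivX mnm1E; case: eqP => [->|_]; last by rewrite scale0r.
by rewrite -{1}[U_(i)%MM]add0m addmK mpolyX0 scale1r.
Qed.

Lemma vf_act_is_linear X : linear (vf_act X).
Proof.
move=> c p q; rewrite /vf_act scaler_sumr -big_split; apply: eq_bigr => i _.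
by rewrite linearP mulrDr scalerAr.
Qed.

HB.instance Definition _ X := GRing.isLinear.Build F {mpoly F[n]} {mpoly F[n]}
  _ (vf_act X) (vf_act_is_linear X).

Lemma vf_actXU X i : vf_act X 'X_i = X i.
Proof.
rewrite /vf_act (bigD1 i) //= mderivXU eqxx mulr1 big1 ?addr0 // => j /negbTE.
by rewrite mderivXU eq_sym => ->; rewrite mulr0.
Qed.

Lemma vf_actM X p q : vf_act X (p * q) = vf_act X p * q + p * vf_act X q.
Proof.
rewrite /vf_act mulr_suml mulr_sumr -big_split; apply: eq_bigr => i _.
by rewrite mderivM mulrDr !mulrA [X i * p]mulrC.
Qed.

Lemma vf_act1 X : vf_act X 1 = 0.
Proof. by rewrite /vf_act big1 // => i _; rewrite -mpolyC1 mderivC mulr0. Qed.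

Lemma vf_act_nat X k : vf_act X k%:R = 0.
Proof. by rewrite -[k%:R]/(1 *+ k) raddfMn /= vf_act1 mul0rn. Qed.

Lemma vf_actXn X p k : vf_act X (p ^+ k) = k%:R * p ^+ k.-1 * vf_act X p.
Proof.
elim: k => [|k IH]; first by rewrite expr0 vf_act1 !mul0r.
rewrite exprS vf_actM IH; case: k {IH} => [|k] /=; rewrite ?exprS; ring.
Qed.

Lemma vf_act_scale g X p : vf_act (vf_scale g X) p = g * vf_act X p.
Proof. by rewrite /vf_act mulr_sumr; apply: eq_bigr => i _; rewrite ffunE mulrA. Qed.

Lemma lie_bracket_scaler X Y g :
  lie_bracket X (vf_scale g Y)
  = vf_scale (vf_act X g) Y + vf_scale g (lie_bracket X Y).
Proof. by apply/ffunP => i; rewrite !ffunE vf_act_scale vf_actM; ring. Qed.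

Lemma lie_bracket_scale_same X g h :
  lie_bracket (vf_scale g X) (vf_scale h X)
  = vf_scale (g * vf_act X h - h * vf_act X g) X.
Proof. by apply/ffunP => i; rewrite !ffunE !vf_act_scale !vf_actM; ring. Qed.

End VectorFieldCalculus.

Section LadderSymmetries.
Variables (F : comNzRingType) (n : nat) (L : 'I_n).
Let u := usum F n.

Definition wsum : {mpoly F[n]} := \sum_(j < n) j%:R * 'X_j.
Let w := wsum.

Definition Zfield : vfield F n := [ffun i => 'X_i - (if i == L then u else 0)].

Lemma YlmE m : Ylm F L m = vf_scale ('X_m * u ^+ (L - m - 1)) Zfield.
Proof. by apply/ffunP => i; rewrite !ffunE. Qed.

Lemma ladderE i : ladder F n i = 'X_i * ((1 + i%:R) * u - w).
Proof.
rewrite ffunE; congr (_ * _).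
rewrite /u /usum /w /wsum mulr_sumr -sumrB; apply: eq_bigr => j _.
rewrite -mul_mpolyC !rmorphB !rmorphD /= rmorph1 -!pmulrn !mpolyC_nat.
by rewrite mulrBl.
Qed.

Lemma Zfield_usum : vf_act Zfield u = 0.
Proof.
rewrite /u /usum raddf_sum /=; under eq_bigr do rewrite vf_actXU ffunE.
by rewrite sumrB -big_mkcond big_pred1_eq subrr.
Qed.

Lemma Zfield_wsum : vf_act Zfield w = w - L%:R * u.
Proof.
rewrite /w /wsum raddf_sum /=.
under eq_bigr do rewrite vf_actM vf_act_nat vf_actXU ffunE mul0r add0r mulrBr.
rewrite sumrB; congr (_ - _).
by rewrite (bigD1 L) //= eqxx big1 ?addr0 // => j /negbTE ->; rewrite mulr0.
Qed.

Lemma Zfield_monomial (m : 'I_n) k :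
  m != L -> vf_act Zfield ('X_m * u ^+ k) = 'X_m * u ^+ k.
Proof.
move=> /negbTE mL.
by rewrite vf_actM vf_actXn Zfield_usum vf_actXU ffunE mL subr0 !mulr0 addr0.
Qed.

Lemma ladder_usum : vf_act (ladder F n) u = u * u.
Proof.
rewrite {1}/u /usum raddf_sum /=.
under eq_bigr do rewrite vf_actXU ladderE mulrBr mulrA mulrDr mulr1 mulrDl.
rewrite sumrB big_split /= -!mulr_suml.
have -> : \sum_(i < n) 'X_i * i%:R = w by apply: eq_bigr => i _; rewrite mulrC.
rewrite -/(usum F n) -/u; ring.
Qed.

Lemma ladder_monomial (m : 'I_n) k :
  vf_act (ladder F n) ('X_m * u ^+ k) = 'X_m * u ^+ k * ((k + m + 1)%:R * u - w).
Proof.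
rewrite vf_actM vf_actXn vf_actXU ladderE ladder_usum !natrD.
case: k => [|k] /=; last rewrite exprS; ring.
Qed.

Lemma Zfield_ladder_rate i : vf_act Zfield ((1 + i%:R) * u - w) = L%:R * u - w.
Proof.
rewrite raddfB /= vf_actM raddfD /= vf_act1 vf_act_nat Zfield_usum Zfield_wsum; ring.
Qed.

Lemma ladder_bracket_Zfield :
  lie_bracket (ladder F n) Zfield = vf_scale (w - L%:R * u) Zfield.
Proof.
apply/ffunP => i; rewrite [LHS]ffunE [RHS]ffunE ladderE [Zfield i]ffunE.
rewrite raddfB /= vf_actM Zfield_ladder_rate !vf_actXU ladderE ffunE.
case: eqP => [->|_]; last by rewrite raddf0 subr0; ring.
by rewrite ladder_usum; ring.
Qed.

Lemma ladder_bracket_Ylm (m : 'I_n) :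
  (m < L)%N -> lie_bracket (ladder F n) (Ylm F L m) = 0.
Proof.
move=> mL; rewrite YlmE lie_bracket_scaler ladder_monomial ladder_bracket_Zfield.
have -> : (L - m - 1 + m + 1)%N = L by rewrite -addnA -subnDA subnK // addn1.
by apply/ffunP => i; rewrite !ffunE; ring.
Qed.

Lemma Ylm_commute (m m' : 'I_n) :
  m != L -> m' != L -> lie_bracket (Ylm F L m) (Ylm F L m') = 0.
Proof.
move=> mL m'L; rewrite !YlmE lie_bracket_scale_same !Zfield_monomial // mulrC subrr.
by apply/ffunP => i; rewrite !ffunE mul0r.
Qed.

Lemma Ylm_free (P : pred 'I_n) (c : 'I_n -> F) :
  \sum_(m < n | P m) c m *: Ylm F L m = 0 ->
  forall m, P m -> m != L -> c m = 0.
Proof.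
move=> sum0 m Pm /negbTE mL.
pose e (j : 'I_n) : F := (j == m)%:R.
have := congr1 (fun V : vfield F n => meval e (V m)) sum0.
rewrite /= ffunE meval0 sum_ffunE raddf_sum /= => <-.
rewrite (bigD1 m) //= big1 ?addr0 => [|j /andP[_ /negbTE jm]]; last first.
  by rewrite !ffunE mevalZ !mevalM mevalXU /e jm !mul0r mulr0.
rewrite !ffunE mevalZ !mevalM mevalB !mevalXU mL meval0 rmorphXn /=.
rewrite /usum raddf_sum /= (bigD1 m) //= big1 ?addr0 => [|j /negbTE jm]; last first.
  by rewrite mevalXU /e jm.
by rewrite mevalXU /e eqxx expr1n subr0 !mulr1.
Qed.

End LadderSymmetries.

Theorem corollary1 (R : realType) (n : nat) (hn : (1 < n)%N) :
  let Y := fun m : 'I_n => Ylm R[i] (ordLast hn) m in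
  [/\ (forall m : 'I_n, (m < n.-1)%N -> lie_bracket (ladder R[i] n) (Y m) = 0),
      (forall c : 'I_n -> R[i],
         \sum_(m < n | (m < n.-1)%N) c m *: Y m = 0 ->
         forall m : 'I_n, (m < n.-1)%N -> c m = 0) &
      (forall m k : 'I_n, (m < n.-1)%N -> (k < n.-1)%N ->
         lie_bracket (Y m) (Y k) = 0)].
Proof.
move=> Y; have ltn_last (m : 'I_n) : (m < n.-1)%N -> (m < ordLast hn)%N by [].
have neq_last (m : 'I_n) : (m < n.-1)%N -> m != ordLast hn.
  by move=> /ltn_last; apply: contraTneq => ->; rewrite ltnn.
split.
- by move=> m /ltn_last; apply: ladder_bracket_Ylm.
- by move=> c sum0 m lt_m; apply: Ylm_free sum0 m lt_m (neq_last m lt_m).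
- by move=> m k /neq_last mL /neq_last kL; apply: Ylm_commute.
Qed.
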